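(* For any graph $G$, $\mathcal{Z}^{\mathrm{TE}}_-(\check G)=\mathcal{Z}^{\mathrm{TE}}_-(G)$ and $\mathcal{Z}^{\mathrm{TS}}_-(\check G)=\mathcal{Z}^{\mathrm{TS}}_-(G)$, where $\check G$ is the skew-nontrivial subgraph of $G$.
   Context: Skew forcing: vertices are colored blue or white; if any vertex $u$ (blue or white) has exactly one white neighbor $v$, then $u$ may force $v$ to become blue. A skew forcing set is a (possibly empty) set of initially blue vertices from which repeated application of this rule turns every vertex blue; $\mathrm{Z}_-(G)$ is the minimum size of a skew forcing set. The skew-nontrivial subgraph $\check G$ of $G$ is obtained as follows: starting with no blue vertices, apply the skew forcing rule until no more forces are possible; then delete every blue vertex all of whose neighbors are blue, and delete every edge both of whose endpoints are blue. $\mathcal{Z}^{\mathrm{TE}}_-(G)$ has as vertices the minimum skew forcing sets of $G$, with $S_1S_2$ an edge iff $S_1\setminus S_2=\{v_1\}$ and $S_2\setminus S_1=\{v_2\}$ for some vertices $v_1,v_2$; $\mathcal{Z}^{\mathrm{TS}}_-(G)$ has the same vertices with the additional requirement $v_1v_2\in E(G)$. *)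

From mathcomp Require Import all_boot.
Set Implicit Arguments. Unset Strict Implicit. Unset Printing Implicit Defensive.

Record graph (T : finType) := Graph { gverts : {set T}; gadj : rel T }.

Definition simple_graph (T : finType) (G : graph T) : Prop :=
  [/\ forall x y, gadj G x y = gadj G y x,
      forall x, ~~ gadj G x x &
      forall x y, gadj G x y -> (x \in gverts G) && (y \in gverts G)].

Section Skew.
Variables (T : finType) (G : graph T).

Definition nbhd (u : T) : {set T} := [set v in gverts G | gadj G u v].

(* one round of the skew forcing rule: every vertex u of G (blue or white)
   with exactly one white neighbour v forces v (all forces valid in B are
   performed; performing them one after another is legitimate since blue
   sets only grow). *)
Definition skew_step (B : {set T}) : {set T} :=
  B :|: [set v | [exists u in gverts G, nbhd u :\: B == [set v]]].

(* final blue set: apply the rule until no more forces are possible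
   (#|T| rounds suffice since each non-stable round adds a vertex). *)
Definition skew_closure (S : {set T}) : {set T} := iter #|T| skew_step S.

Definition skew_forcing (S : {set T}) : bool :=
  (S \subset gverts G) && (gverts G \subset skew_closure S).

Definition min_skew_forcing_sets : {set {set T}} :=
  [set S | skew_forcing S &&
           [forall S' : {set T}, skew_forcing S' ==> (#|S| <= #|S'|)]].

Definition skew_nontrivial : graph T :=
  let B := skew_closure set0 in
  let V' := gverts G :\: [set x in B | nbhd x \subset B] in
  Graph V' (fun x y => [&& gadj G x y, ~~ ((x \in B) && (y \in B)),
                          x \in V' & y \in V']).

Definition ZTE : graph {set T} :=
  Graph min_skew_forcing_sets
    (fun S1 S2 => [&& S1 \in min_skew_forcing_sets, S2 \in min_skew_forcing_sets &
       [exists v1, exists v2, (S1 :\: S2 == [set v1]) && (S2 :\: S1 == [set v2])]]).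

Definition ZTS : graph {set T} :=
  Graph min_skew_forcing_sets
    (fun S1 S2 => [&& S1 \in min_skew_forcing_sets, S2 \in min_skew_forcing_sets &
       [exists v1, exists v2, [&& S1 :\: S2 == [set v1], S2 :\: S1 == [set v2]
                                 & gadj G v1 v2]]]).
End Skew.

(* Every minimum skew forcing set avoids the set B of vertices turned blue from
   the empty set, since removing them from a forcing set keeps it forcing; so it
   suffices that a set disjoint from B is skew forcing in G iff it is in the
   skew-nontrivial subgraph. For supersets of B the skew rule acts identically in
   both graphs, because the deleted vertices D have all their neighbours in B.
   What remains is that B minus D is already forced from the empty set in the
   subgraph: in the forcing process from the empty set in G, every vertex of D is
   forced by a vertex of D and every vertex forces at most once, so by counting,
   vertices of D only ever force vertices of D, and all other forces survive. *)

From mathcomp Require Import all_boot.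
From Stdlib Require Import FunctionalExtensionality.
Set Implicit Arguments. Unset Strict Implicit. Unset Printing Implicit Defensive.

Lemma setD_eq_set1 (T : finType) (A X : {set T}) (v : T) :
  (A :\: X == [set v]) = [&& v \in A, v \notin X & A \subset v |: X].
Proof.
apply/eqP/and3P => [AXv | [vA vX sAvX]].
  have : v \in A :\: X by rewrite AXv set11.
  rewrite in_setD => /andP[vX vA]; split=> //; apply/subsetP => w wA.
  rewrite in_setU1; case: (boolP (w \in X)) => [|wX]; first by rewrite orbT.
  have : w \in A :\: X by rewrite in_setD wX wA.
  by rewrite AXv in_set1 => ->.
apply/setP => w; rewrite in_setD in_set1.
have [->|wv] := eqVneq w v; first by rewrite vA vX.
have := subsetP sAvX w; rewrite in_setU1 (negbTE wv) /=.
by case: (w \in A) => [->|]; rewrite ?andbF.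
Qed.

Section IterExtensive.
Variables (T : finType) (f : {set T} -> {set T}) (S : {set T}).
Hypothesis f_ext : forall X : {set T}, X \subset f X.

Lemma iter_extensive_mono m n : m <= n -> iter m f S \subset iter n f S.
Proof.
move/subnK <-; elim: (n - m) => [|k IH]; first by rewrite add0n.
by rewrite addSn; apply: subset_trans IH (f_ext _).
Qed.

Lemma iter_extensive_fixpoint : f (iter #|T| f S) = iter #|T| f S.
Proof.
pose X m := iter m f S.
have card_grow m : (forall k, k < m -> f (X k) != X k) -> m <= #|X m|.
  elim: m => // m IH nfix.
  have lt_m : #|X m| < #|X m.+1|.
    by apply: proper_card; rewrite properEneq eq_sym nfix ?f_ext.
  by apply: leq_ltn_trans lt_m; apply: IH => k lt_km; apply: nfix (ltnW lt_km).
have [/existsP[m /eqP fix_m] | no_fix] := boolP [exists m : 'I_#|T|.+1, f (X m) == X m].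
  by rewrite -(subnK (ltn_ord m : m <= #|T|)) iterD (iter_fix _ fix_m).
suff : #|T|.+1 <= #|X #|T|.+1| by rewrite ltnNge max_card.
apply: card_grow => k lt_kT; apply: contra no_fix => /eqP fix_k.
by apply/existsP; exists (Ordinal lt_kT); rewrite fix_k.
Qed.
End IterExtensive.

Section SkewClosure.
Variables (T : finType) (G : graph T).

Definition skew_forces (X : {set T}) (u v : T) : bool :=
  (u \in gverts G) && (nbhd G u :\: X == [set v]).

Definition skew_closed (X : {set T}) : Prop :=
  forall u v, skew_forces X u v -> v \in X.

Lemma skew_forcesE (X : {set T}) (u v : T) :
  skew_forces X u v = [&& u \in gverts G, v \in nbhd G u, v \notin X
                        & nbhd G u \subset v |: X].
Proof. by rewrite /skew_forces setD_eq_set1. Qed.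

Lemma in_skew_step (X : {set T}) (v : T) :
  (v \in skew_step G X) = (v \in X) || [exists u, skew_forces X u v].
Proof. by rewrite in_setU inE. Qed.

Lemma in_nbhd (u v : T) : (v \in nbhd G u) = (v \in gverts G) && gadj G u v.
Proof. exact: in_set. Qed.

Lemma nbhd_subset (u : T) : nbhd G u \subset gverts G.
Proof. by apply/subsetP => v; rewrite in_nbhd => /andP[]. Qed.

Lemma skew_forces_mono (X Y : {set T}) (u v : T) :
  X \subset Y -> v \notin Y -> skew_forces X u v -> skew_forces Y u v.
Proof.
move=> sXY vY; rewrite !skew_forcesE vY => /and4P[-> -> _ sN] /=.
by apply: subset_trans sN _; apply: setUS.
Qed.

Lemma skew_step_mono (X Y : {set T}) : X \subset Y -> skew_step G X \subset skew_step G Y.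
Proof.
move=> sXY; apply/subsetP => v; rewrite !in_skew_step.
have [vY|vY] := boolP (v \in Y); first by rewrite orTb.
case/orP => [/(subsetP sXY)|/existsP[u uv]]; first by rewrite (negbTE vY).
by apply/orP; right; apply/existsP; exists u; apply: skew_forces_mono uv.
Qed.

Lemma skew_step_closed (X : {set T}) : skew_closed X -> skew_step G X \subset X.
Proof.
by move=> cX; apply/subsetP => v; rewrite in_skew_step => /orP[//|/existsP[u /cX]].
Qed.

Lemma subset_skew_step (X : {set T}) : X \subset skew_step G X.
Proof. exact: subsetUl. Qed.

Lemma subset_skew_closure (S : {set T}) : S \subset skew_closure G S.
Proof. exact: (iter_extensive_mono _ subset_skew_step (leq0n _)). Qed.

Lemma skew_closure_closed (S : {set T}) : skew_closed (skew_closure G S).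
Proof.
move=> u v uv; rewrite -[skew_closure G S](iter_extensive_fixpoint _ subset_skew_step).
by rewrite in_skew_step; apply/orP; right; apply/existsP; exists u.
Qed.

Lemma iter_skew_step_least (S Y : {set T}) k :
  S \subset Y -> skew_closed Y -> iter k (skew_step G) S \subset Y.
Proof.
move=> sSY cY; elim: k => //= k IH.
exact: subset_trans (skew_step_mono IH) (skew_step_closed cY).
Qed.

Lemma skew_closure_least (S Y : {set T}) :
  S \subset Y -> skew_closed Y -> skew_closure G S \subset Y.
Proof. exact: iter_skew_step_least. Qed.

Lemma skew_closure_sub (S S' : {set T}) :
  S \subset skew_closure G S' -> skew_closure G S \subset skew_closure G S'.
Proof. by move=> sS; apply: (skew_closure_least sS); apply: skew_closure_closed. Qed.

(* Once a vertex has forced, all its neighbours are blue. *)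
Lemma skew_forces_target_uniq (X Y : {set T}) (u v w : T) :
  X \subset Y -> skew_forces X u v -> skew_forces Y u w -> v = w.
Proof.
rewrite !skew_forcesE => sXY /and4P[_ _ _ sNv] /and4P[_ wN wY _].
have := subsetP sNv w wN; rewrite in_setU1 => /orP[/eqP //|wX].
by rewrite (subsetP sXY w wX) in wY.
Qed.

End SkewClosure.

Section SkewNontrivial.
Variables (T : finType) (G : graph T).
Local Notation B := (skew_closure G set0).
Local Notation Gc := (skew_nontrivial G).
Local Notation blue_at t := (iter t (skew_step G) set0).

Definition skew_trivial : {set T} := [set x in B | nbhd G x \subset B].
Local Notation D := skew_trivial.

Lemma gverts_skew_nontrivial : gverts Gc = gverts G :\: D.
Proof. by []. Qed.

Lemma gadj_skew_nontrivial (x y : T) :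
  gadj Gc x y = [&& gadj G x y, ~~ ((x \in B) && (y \in B)),
                    x \in gverts Gc & y \in gverts Gc].
Proof. by []. Qed.

Lemma skew_trivial_sub : D \subset B.
Proof. by apply/subsetP => x; rewrite inE => /andP[]. Qed.

Lemma nbhd_skew_trivial (x : T) : x \in D -> nbhd G x \subset B.
Proof. by rewrite inE => /andP[]. Qed.

Lemma gverts_skew_nontrivial_outside (x : T) :
  x \notin B -> (x \in gverts Gc) = (x \in gverts G).
Proof.
move=> xB; rewrite gverts_skew_nontrivial in_setD andb_idl // => _.
by apply: contra xB; apply: (subsetP skew_trivial_sub).
Qed.

Lemma gadj_skew_nontrivial_outside (x y : T) :
  x \in gverts G :\: B -> y \in gverts G :\: B -> gadj Gc x y = gadj G x y.
Proof.
move=> /setDP[xV xB] /setDP[yV yB].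
rewrite gadj_skew_nontrivial !gverts_skew_nontrivial_outside // xV yV.
by rewrite (negbTE xB) !andbT.
Qed.

Lemma nbhd_skew_nontrivial_setD (X : {set T}) (u : T) :
  B \subset X -> u \in gverts Gc -> nbhd Gc u :\: X = nbhd G u :\: X.
Proof.
move=> sBX uGc; apply/setP => v; rewrite !in_setD.
have [//|vX] := boolP (v \in X).
have vB : v \notin B by apply: contra vX; apply: (subsetP sBX).
rewrite !in_nbhd gadj_skew_nontrivial uGc gverts_skew_nontrivial_outside //.
by rewrite (negbTE vB) andbF /=; case: (v \in gverts G); rewrite ?andbT.
Qed.

Lemma nbhd_skew_nontrivial_sub (u : T) : nbhd Gc u \subset nbhd G u :\: D.
Proof.
apply/subsetP => v; rewrite in_nbhd gadj_skew_nontrivial gverts_skew_nontrivial.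
by rewrite !in_setD in_nbhd => /and3P[/andP[vD vV] uv _]; rewrite vD vV uv.
Qed.

Lemma skew_forces_nontrivial (X : {set T}) (u v : T) :
  B \subset X -> skew_forces Gc X u v = skew_forces G X u v.
Proof.
move=> sBX; rewrite /skew_forces.
have [uGc|uGc] := boolP (u \in gverts Gc).
  by move: (uGc); rewrite nbhd_skew_nontrivial_setD // => /setDP[->].
apply/esym/negP; rewrite -/(skew_forces G X u v) skew_forcesE => /and4P[uV vN vX _].
move: uGc; rewrite gverts_skew_nontrivial in_setD uV andbT negbK => uD.
by rewrite (subsetP sBX) // (subsetP (nbhd_skew_trivial uD)) in vX.
Qed.

Lemma skew_closed_nontrivial (X : {set T}) :
  B \subset X -> skew_closed Gc X <-> skew_closed G X.
Proof.
move=> sBX; split=> cX u v.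
  by rewrite -skew_forces_nontrivial //; apply: cX.
by rewrite skew_forces_nontrivial //; apply: cX.
Qed.

Lemma skew_forcing_lift (S : {set T}) : skew_forcing Gc S -> skew_forcing G S.
Proof.
rewrite /skew_forcing gverts_skew_nontrivial => /andP[sSV' sV'C].
rewrite (subset_trans sSV' (subsetDl _ _)) /=.
have sBC : B \subset skew_closure G S := skew_closure_sub (sub0set _).
have sCC : skew_closure Gc S \subset skew_closure G S.
  apply: skew_closure_least (subset_skew_closure _ _) _.
  by apply/(skew_closed_nontrivial sBC)/skew_closure_closed.
apply/subsetP => v vV; have [vD|vD] := boolP (v \in D).
  exact: subsetP sBC _ (subsetP skew_trivial_sub _ vD).
by apply/(subsetP sCC)/(subsetP sV'C); rewrite in_setD vD.
Qed.

Lemma skew_forcing_setD_blue0 (S : {set T}) :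
  skew_forcing G S -> skew_forcing G (S :\: B).
Proof.
move=> /andP[sSV sVC]; rewrite /skew_forcing (subset_trans (subsetDl _ _) sSV) /=.
apply: subset_trans sVC (skew_closure_sub _); apply/subsetP => x xS.
have [xB|xB] := boolP (x \in B).
  exact: subsetP (skew_closure_sub (sub0set _)) _ xB.
by apply: (subsetP (subset_skew_closure _ _)); rewrite in_setD xB.
Qed.

Lemma min_skew_forcing_disjoint_blue0 (S : {set T}) :
  S \in min_skew_forcing_sets G -> [disjoint S & B].
Proof.
rewrite inE => /andP[fS /forallP minS].
have := minS (S :\: B); rewrite skew_forcing_setD_blue0 //= => le.
by apply/setDidPl/eqP; rewrite eqEcard subsetDl le.
Qed.

Lemma min_skew_forcing_sub (S : {set T}) :
  S \in min_skew_forcing_sets G -> S \subset gverts G :\: B.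
Proof.
move=> Smin; rewrite subsetD min_skew_forcing_disjoint_blue0 // andbT.
by move: Smin; rewrite inE => /andP[/andP[]].
Qed.

Lemma blue_at_sub_blue0 (t : nat) : blue_at t \subset B.
Proof. by apply: iter_skew_step_least (sub0set _) _; apply: skew_closure_closed. Qed.

Lemma blue_at_forced (n : nat) (v : T) :
  v \in blue_at n -> exists2 t, t < n & exists u, skew_forces G (blue_at t) u v.
Proof.
elim: n => [|n IH]; first by rewrite inE.
rewrite in_skew_step => /orP[/IH[t lt_tn fv] | /existsP[u fv]].
  by exists t => //; apply: leqW.
by exists n => //; exists u.
Qed.

Lemma blue_at_forces_uniq (s t : nat) (u v w : T) :
  skew_forces G (blue_at s) u v -> skew_forces G (blue_at t) u w -> v = w.
Proof.
have mono := iter_extensive_mono set0 (subset_skew_step G).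
have [le_st|/ltnW le_ts] := leqP s t => fv fw.
  exact: skew_forces_target_uniq (mono _ _ le_st) fv fw.
exact/esym/(skew_forces_target_uniq (mono _ _ le_ts) fw fv).
Qed.

Lemma blue0_forcer_trivial (X : {set T}) (u v : T) :
  X \subset B -> skew_forces G X u v -> v \in B -> u \in B -> u \in D.
Proof.
move=> sXB; rewrite skew_forcesE => /and4P[_ _ _ sN] vB uB.
by rewrite inE uB (subset_trans sN) // subUset sub1set vB.
Qed.

Hypothesis adj_sym : forall x y, gadj G x y = gadj G y x.

Lemma trivial_target_forcer (X : {set T}) (u v : T) :
  X \subset B -> skew_forces G X u v -> v \in D -> u \in D.
Proof.
move=> sXB fv vD; apply: (blue0_forcer_trivial sXB fv).
  exact: subsetP skew_trivial_sub _ vD.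
move: fv; rewrite skew_forcesE in_nbhd => /and4P[uV /andP[_ uv] _ _].
by apply: (subsetP (nbhd_skew_trivial vD)); rewrite in_nbhd uV -adj_sym.
Qed.

(* Choosing a forcer for each vertex of [D] gives an injection of [D] into
   itself, hence a bijection. *)
Lemma trivial_forcer_target (t : nat) (u x : T) :
  u \in D -> skew_forces G (blue_at t) u x -> x \in D.
Proof.
move=> uD fx.
pose h v := odflt v [pick u | [exists s : 'I_#|T|, skew_forces G (blue_at s) u v]].
have h_forcer v : v \in D -> exists s, skew_forces G (blue_at s) (h v) v.
  move=> /(subsetP skew_trivial_sub) /blue_at_forced[s lt_sT [w fw]].
  rewrite /h; case: pickP => [u' /= /existsP[s' fu'] | /(_ w) /negbT /existsPn nf].
    by exists s'.
  by have := nf (Ordinal lt_sT); rewrite fw.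
have h_trivial v : v \in D -> h v \in D.
  move=> vD; have [s fv] := h_forcer v vD.
  exact: trivial_target_forcer (blue_at_sub_blue0 s) fv vD.
have h_onto : h @: D = D.
  apply/eqP; rewrite eqEcard card_in_imset ?leqnn ?andbT.
    by apply/subsetP => _ /imsetP[v vD ->]; apply: h_trivial.
  move=> v w vD wD hvw; have [s fv] := h_forcer v vD; have [s' fw] := h_forcer w wD.
  by rewrite hvw in fv; apply: blue_at_forces_uniq fv fw.
have /imsetP[v vD def_u] : u \in h @: D by rewrite h_onto.
have [s fv] := h_forcer v vD; rewrite -def_u in fv.
by rewrite -(blue_at_forces_uniq fv fx).
Qed.

Lemma blue0_sub_nontrivial : B \subset skew_closure Gc set0 :|: D.
Proof.
set C := skew_closure Gc set0; rewrite {1}/skew_closure.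
elim: #|T| => [|t IH]; first exact: sub0set.
apply/subsetP => x; rewrite in_skew_step => /orP[/(subsetP IH) // | /existsP[u fx]].
have [xD|xD] := boolP (x \in D); first by rewrite in_setU xD orbT.
have uD : u \notin D by apply: contra xD => uD; apply: trivial_forcer_target uD fx.
have xB : x \in B.
  apply: (subsetP (blue_at_sub_blue0 t.+1)).
  by rewrite in_skew_step; apply/orP; right; apply/existsP; exists u.
have uB : u \notin B.
  by apply: contra uD; apply: blue0_forcer_trivial (blue_at_sub_blue0 t) fx xB.
rewrite in_setU; apply/orP; left; apply: contraT => xC.
move: fx; rewrite skew_forcesE => /and4P[uV xN _ sN].
have uGc : u \in gverts Gc by rewrite gverts_skew_nontrivial_outside.
have xGc : x \in gverts Gc.
  by rewrite gverts_skew_nontrivial in_setD xD (subsetP (nbhd_subset G u)).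
suff fxC : skew_forces Gc C u x by rewrite (skew_closure_closed fxC) in xC.
rewrite skew_forcesE uGc xC in_nbhd xGc gadj_skew_nontrivial uGc xGc (negbTE uB).
rewrite !andbT /=; move: xN; rewrite in_nbhd => /andP[_ ->] /=.
apply/subsetP => w /(subsetP (nbhd_skew_nontrivial_sub u)) /setDP[wN wD].
have := subsetP sN w wN; rewrite !in_setU1 => /orP[-> // | /(subsetP IH)].
by rewrite in_setU (negbTE wD) orbF => ->; rewrite orbT.
Qed.

Lemma skew_forcing_restrict (S : {set T}) :
  [disjoint S & B] -> skew_forcing G S -> skew_forcing Gc S.
Proof.
move=> dSB /andP[sSV sVC]; set C := skew_closure Gc S.
have sSGc : S \subset gverts Gc.
  apply/subsetP => x xS; rewrite gverts_skew_nontrivial_outside ?(subsetP sSV) //.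
  by rewrite (disjointFr dSB xS).
have sBY : B \subset C :|: D.
  apply: subset_trans blue0_sub_nontrivial (setSU _ _).
  exact: skew_closure_sub (sub0set _).
have cY : skew_closed Gc (C :|: D).
  move=> u v; rewrite /skew_forces setDUr (setIidPl _) => [fv|].
    by rewrite in_setU (skew_closure_closed fv).
  have := nbhd_skew_nontrivial_sub u; rewrite subsetD => /andP[_ dND].
  by rewrite (setDidPl dND) subsetDl.
have sCY : skew_closure G S \subset C :|: D.
  apply: skew_closure_least (subset_trans (subset_skew_closure _ _) (subsetUl _ _)) _.
  exact/(skew_closed_nontrivial sBY).
rewrite /skew_forcing sSGc gverts_skew_nontrivial /=.
apply/subsetP => v /setDP[vV vD].
by have := subsetP sCY v (subsetP sVC v vV); rewrite in_setU (negbTE vD) orbF.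
Qed.

Lemma min_skew_forcing_sets_nontrivial :
  min_skew_forcing_sets Gc = min_skew_forcing_sets G.
Proof.
apply/setP => S; apply/idP/idP => [|Smin].
  rewrite !inE => /andP[fS /forallP minS]; rewrite skew_forcing_lift //=.
  apply/forallP => S'; apply/implyP => fS'.
  have dS'B : [disjoint S' :\: B & B].
    by have := subxx (S' :\: B); rewrite subsetD => /andP[].
  have := minS (S' :\: B); rewrite skew_forcing_restrict ?skew_forcing_setD_blue0 //=.
  by move/leq_trans; apply; apply/subset_leq_card/subsetDl.
have dSB := min_skew_forcing_disjoint_blue0 Smin.
move: Smin; rewrite !inE => /andP[fS /forallP minS].
rewrite skew_forcing_restrict //=; apply/forallP => S'; apply/implyP => fS'.
by have := minS S'; rewrite skew_forcing_lift.
Qed.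

End SkewNontrivial.

Theorem theorem5p20 (T : finType) (G : graph T) :
  simple_graph G ->
  ZTE (skew_nontrivial G) = ZTE G /\ ZTS (skew_nontrivial G) = ZTS G.
Proof.
case=> adj_sym _ _; have minE := min_skew_forcing_sets_nontrivial adj_sym.
split; first by rewrite /ZTE minE.
rewrite /ZTS minE; congr Graph.
apply: functional_extensionality => S1; apply: functional_extensionality => S2.
have [S1min|] := boolP (S1 \in min_skew_forcing_sets G); last by [].
have [S2min|] := boolP (S2 \in min_skew_forcing_sets G); last by [].
apply: eq_existsb => v1; apply: eq_existsb => v2.
have [e1|] := boolP (S1 :\: S2 == [set v1]); last by [].
have [e2|] := boolP (S2 :\: S1 == [set v2]); last by [].
move: e1 e2; rewrite !setD_eq_set1 => /and3P[v1S1 _ _] /and3P[v2S2 _ _].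
have v1out := subsetP (min_skew_forcing_sub S1min) v1 v1S1.
have v2out := subsetP (min_skew_forcing_sub S2min) v2 v2S2.
by rewrite (gadj_skew_nontrivial_outside v1out v2out).
Qed.
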